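(* Every regular octahedron $O$ in $\mathbb{R}^3$ can be inside-out dissected with $124$ pieces.
   Context: An inside-out dissection of a polyhedron $P$ is a decomposition of $P$ into finitely many polyhedra $P_1,\ldots,P_k$ (called pieces; they have pairwise disjoint interiors and their union is $P$) such that (1) the pieces can be rearranged, applying to each piece only a rotation and a translation, to form a polyhedron $P'$ congruent to $P$, and (2) the boundary of $P'$ is composed of internal cuts of $P$, i.e. of (images of) portions of the pieces' boundaries that lay in the interior of $P$ rather than on the boundary of $P$. If such a decomposition exists, $P$ is said to be inside-out dissected with $k$ pieces. *)

From HB Require Import structures.
From mathcomp Require Import all_boot all_order all_algebra.
From mathcomp Require Import boolp classical_sets reals.
Set Implicit Arguments. Unset Strict Implicit. Unset Printing Implicit Defensive.
Import Order.TTheory GRing.Theory Num.Theory.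
Local Open Scope ring_scope.
Local Open Scope classical_set_scope.

Section Geometry.
Variable R : realType.

Definition pt := 'rV[R]_3.

Definition sqnorm (x : pt) : R := \sum_(i < 3) x ord0 i ^+ 2.

Definition interior (A : set pt) : set pt :=
  [set x | exists e : R, 0 < e /\ forall y, sqnorm (y - x) < e -> A y].
Definition closure (A : set pt) : set pt :=
  [set x | forall e : R, 0 < e -> exists y, A y /\ sqnorm (y - x) < e].
Definition boundary (A : set pt) : set pt := closure A `\` interior A.

Definition conv_hull (n : nat) (p : 'I_n -> pt) : set pt :=
  [set x | exists w : 'I_n -> R, (forall i, 0 <= w i) /\ \sum_(i < n) w i = 1
       /\ x = \sum_(i < n) w i *: p i].

Definition nondeg_tetra (p : 'I_4 -> pt) : Prop :=
  \det (\matrix_(i < 3) (p (lift ord0 i) - p ord0)) != 0.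

Definition polyhedron (P : set pt) : Prop :=
  exists (n : nat) (T : 'I_n -> 'I_4 -> pt),
    (0 < n)%N /\ (forall k, nondeg_tetra (T k)) /\
    (forall x, P x <-> exists k, conv_hull (T k) x).

Definition orthogonal_mx (Q : 'M[R]_3) : Prop := Q *m Q^T = 1%:M.
Definition rotation_mx (Q : 'M[R]_3) : Prop := orthogonal_mx Q /\ \det Q = 1.

Definition motion (Q : 'M[R]_3) (t : pt) (x : pt) : pt := x *m Q + t.

Definition inside_out_dissectable (P : set pt) (k : nat) : Prop :=
  exists (Pc : 'I_k -> set pt) (Q : 'I_k -> 'M[R]_3) (t : 'I_k -> pt),
    (forall i, polyhedron (Pc i)) /\
    (forall i j, i != j -> interior (Pc i) `&` interior (Pc j) = set0) /\
    (forall x, P x <-> exists i, Pc i x) /\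
    (forall i, rotation_mx (Q i)) /\
    (forall i j, i != j ->
       interior (motion (Q i) (t i) @` Pc i) `&`
       interior (motion (Q j) (t j) @` Pc j) = set0) /\
    (let P' := [set y | exists i, (motion (Q i) (t i) @` Pc i) y] in
     (exists (Q0 : 'M[R]_3) (t0 : pt), orthogonal_mx Q0 /\
        P' = motion Q0 t0 @` P) /\
     (* (2) the boundary of P' consists of images of internal cuts *)
     boundary P' `<=`
       closure [set y | exists i,
                 (motion (Q i) (t i) @` (boundary (Pc i) `&` interior P)) y]).

(* regular octahedron with center c, circumradius r > 0 and orientation U
   (U orthogonal): convex hull of c +- r * (rows of U) *)
Definition oct_vertex (c : pt) (r : R) (U : 'M[R]_3) (j : 'I_6) : pt :=
  c + (if (j < 3)%N then r else - r) *: row (inord (j %% 3)) U.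

Definition regular_octahedron (c : pt) (r : R) (U : 'M[R]_3) : set pt :=
  conv_hull (oct_vertex c r U).

End Geometry.

From HB Require Import structures.
From mathcomp Require Import all_boot all_order all_algebra.
From mathcomp Require Import boolp classical_sets reals.
From mathcomp Require Import ring lra.
Set Implicit Arguments. Unset Strict Implicit. Unset Printing Implicit Defensive.
Import Order.TTheory GRing.Theory Num.Theory.
Local Open Scope ring_scope.
Local Open Scope classical_set_scope.

(* The octahedron [|x|_1 <= 1] is cut by the coordinate planes into eight copies of the
   simplex [conv(0, e1, e2, e3)], and the midpoints [m_ij] of its outer edges cut that
   simplex into four tetrahedra: the corners [conv(e_i, 0, m_ij, m_ik)] and the middle
   [conv(m12, 0, m23, m13)].  Each of these 32 tetrahedra is mapped onto itself by a
   half-turn exchanging two pairs of its vertices; the half-turn swaps its only face on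
   the surface of the octahedron with a face through the inside, so rotating every piece
   in place turns the octahedron inside out.  Bisecting a piece preserves this, which
   brings the count to 124, and a similarity carries the unit octahedron onto any regular
   octahedron. *)

Lemma big_ord3 (V : nmodType) (F : 'I_3 -> V) : \sum_(i < 3) F i = F 0 + F 1 + F 2.
Proof.
rewrite !big_ord_recl big_ord0 addr0 !addrA.
by congr (F _ + F _ + F _); apply: val_inj.
Qed.

Lemma big_ord4 (V : nmodType) (F : 'I_4 -> V) : \sum_(i < 4) F i = F 0 + F 1 + F 2 + F 3.
Proof.
rewrite !big_ord_recl big_ord0 addr0 !addrA.
by congr (F _ + F _ + F _ + F _); apply: val_inj.
Qed.

Lemma big_ord6 (V : nmodType) (F : 'I_6 -> V) :
  \sum_(i < 6) F i = F 0 + F 1 + F 2 + F 3 + F 4 + F 5.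
Proof.
rewrite !big_ord_recl big_ord0 addr0 !addrA.
by congr (F _ + F _ + F _ + F _ + F _ + F _); apply: val_inj.
Qed.

Lemma det_mx33 (R : comNzRingType) (A : 'M[R]_3) : \det A =
  A 0 0 * (A 1 1 * A 2 2 - A 1 2 * A 2 1) - A 0 1 * (A 1 0 * A 2 2 - A 1 2 * A 2 0)
  + A 0 2 * (A 1 0 * A 2 1 - A 1 1 * A 2 0).
Proof.
rewrite (expand_det_row _ ord0) !big_ord_recl big_ord0 /cofactor.
rewrite !(expand_det_row _ ord0) !big_ord_recl !big_ord0 /cofactor !det_mx11 !mxE /=.
set a := fun i j : nat => A (inord i) (inord j).
have aE (i j : 'I_3) : A i j = a i j by rewrite /a !inord_val.
by rewrite !aE /= !expr0 !expr1 /=; ring.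
Qed.

Lemma ord3P (P : 'I_3 -> Prop) : P 0 -> P 1 -> P 2 -> forall i, P i.
Proof.
move=> P0 P1 P2 i; have [->|[->|->]] // : i = 0 \/ i = 1 \/ i = 2.
by case: i => [[|[|[|//]]] ?]; [left | right; left | right; right]; apply: val_inj.
Qed.

Lemma ord4P (P : 'I_4 -> Prop) : P 0 -> P 1 -> P 2 -> P 3 -> forall i, P i.
Proof.
move=> P0 P1 P2 P3 i; have [->|[->|[->|->]]] // : i = 0 \/ i = 1 \/ i = 2 \/ i = 3.
by case: i => [[|[|[|[|//]]]] ?]; [left | right; left | right; right; left | right; right; right];
  apply: val_inj.
Qed.

Definition tet (T : Type) (a b c d : T) : 'I_4 -> T := fun i => nth a [:: a; b; c; d] i.

Lemma tet_eta (T : Type) (p : 'I_4 -> T) : p = tet (p 0) (p 1) (p 2) (p 3).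
Proof. by apply: funext; elim/ord4P. Qed.

Section Space.
Variable R : realType.
Notation point := (pt R).

Definition row3 (a b c : R) : point :=
  \row_(j < 3) match (j : nat) with 0 => a | 1 => b | _ => c end.

Lemma pt_eq (x y : point) :
  x 0 0 = y 0 0 -> x 0 1 = y 0 1 -> x 0 2 = y 0 2 -> x = y.
Proof. by move=> *; apply/rowP; elim/ord3P. Qed.

Lemma row3_neq0 a b c : a != 0 -> row3 a b c != 0.
Proof.
by move=> a0; apply: contraNneq a0 => /(congr1 (fun v : point => v 0 0)); rewrite !mxE /= => ->.
Qed.

Lemma sqnormE (x : point) : sqnorm x = x 0 0 ^+ 2 + x 0 1 ^+ 2 + x 0 2 ^+ 2.
Proof. exact: big_ord3. Qed.

Lemma sqnorm_ge0 (x : point) : 0 <= sqnorm x.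
Proof. rewrite sqnormE; nra. Qed.

Lemma sqnorm0 : sqnorm (0 : point) = 0.
Proof. by rewrite sqnormE !mxE; ring. Qed.

Lemma sqnorm_gt0 (x : point) : x != 0 -> 0 < sqnorm x.
Proof.
move=> x0; rewrite lt_neqAle sqnorm_ge0 andbT eq_sym; apply: contra x0 => /eqP.
rewrite sqnormE => x2; apply/eqP/pt_eq; rewrite !mxE; nra.
Qed.

Lemma sqnormZ (a : R) (x : point) : sqnorm (a *: x) = a ^+ 2 * sqnorm x.
Proof. rewrite !sqnormE !mxE; ring. Qed.

Lemma sqnorm_mx (x : point) : sqnorm x = (x *m x^T) 0 0.
Proof. by rewrite /sqnorm !mxE; apply: eq_bigr => j _; rewrite !mxE expr2. Qed.

Lemma coord_lt (x : point) (d : R) (i : 'I_3) :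
  0 < d -> sqnorm x < d ^+ 2 -> `|x 0 i| < d.
Proof.
move=> d0 xd.
have xi : x 0 i ^+ 2 < d ^+ 2 by apply: le_lt_trans xd; rewrite sqnormE; elim/ord3P: i; nra.
by rewrite ltr_norml; apply/andP; split; nra.
Qed.

Definition dot (u x : point) : R := \sum_(i < 3) u 0 i * x 0 i.

Lemma dotE (u x : point) : dot u x = u 0 0 * x 0 0 + u 0 1 * x 0 1 + u 0 2 * x 0 2.
Proof. exact: big_ord3. Qed.

Lemma dot_mx (u x : point) : dot u x = (x *m u^T) 0 0.
Proof. by rewrite /dot !mxE; apply: eq_bigr => j _; rewrite !mxE mulrC. Qed.

Lemma small_scaling (K e : R) :
  0 <= K -> 0 < e -> exists tau, [/\ 0 < tau, tau <= 1 & tau ^+ 2 * K < e].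
Proof.
move=> K0 e0; have eK : 0 < e + K by lra.
pose tau := e / (e + K).
have tau0 : 0 < tau by rewrite divr_gt0.
have tau1 : tau <= 1 by rewrite ler_pdivrMr // mul1r; lra.
have tauK : tau * K < e by rewrite mulrAC ltr_pdivrMr //; nra.
exists tau; split => //; nra.
Qed.

Lemma interior_subset (A : set point) : interior A `<=` A.
Proof. by move=> x [e [e0 Ae]]; apply: Ae; rewrite subrr sqnorm0. Qed.

Lemma subset_closure (A : set point) : A `<=` closure A.
Proof. by move=> x Ax e e0; exists x; rewrite subrr sqnorm0. Qed.

Lemma interior_mono (A B : set point) : A `<=` B -> interior A `<=` interior B.
Proof. by move=> AB x [e [e0 Ae]]; exists e; split => // y /Ae /AB. Qed.

Lemma closure_mono (A B : set point) : A `<=` B -> closure A `<=` closure B.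
Proof. by move=> AB x Ax e /Ax [y [/AB By yx]]; exists y. Qed.

Lemma closureU (A B : set point) : closure (A `|` B) `<=` closure A `|` closure B.
Proof.
move=> x ABx; apply: contrapT => /not_orP [/existsNP [e1 /not_implyP [e10 nA]]].
move=> /existsNP [e2 /not_implyP [e20 nB]].
have [y [[Ay|By] yx]] : exists y, (A `|` B) y /\ sqnorm (y - x) < Num.min e1 e2.
  by apply: ABx; rewrite lt_min e10 e20.
- by apply: nA; exists y; split => //; apply: lt_le_trans yx _; rewrite ge_min lexx.
- by apply: nB; exists y; split => //; apply: lt_le_trans yx _; rewrite ge_min lexx orbT.
Qed.

Lemma interior_disjoint_sub (A B A' B' : set point) : A' `<=` A -> B' `<=` B ->
  interior A `&` interior B = set0 -> interior A' `&` interior B' = set0.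
Proof.
move=> AA' BB' AB; apply/seteqP; split => // x [Ax Bx]; rewrite -AB.
by split; [apply: interior_mono AA' _ Ax | apply: interior_mono BB' _ Bx].
Qed.

Definition separated (A B : set point) := exists (u : point) (b : R),
  [/\ u != 0, forall x, A x -> 0 <= dot u x + b & forall x, B x -> dot u x + b <= 0].

Lemma halfspace_not_interior (A : set point) (u : point) b z :
  u != 0 -> (forall x, A x -> 0 <= dot u x + b) -> dot u z + b <= 0 -> ~ interior A z.
Proof.
move=> u0 Au uz [e [e0 Ae]].
have [tau [tau0 _ small]] := small_scaling (sqnorm_ge0 u) e0.
have Az : A (z - tau *: u).
  by apply: Ae; rewrite addrAC subrr add0r -scaleNr sqnormZ sqrrN.
have := Au _ Az; have -> : dot u (z - tau *: u) = dot u z - tau * sqnorm u.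
  by rewrite !dotE sqnormE !mxE; ring.
by have := mulr_gt0 tau0 (sqnorm_gt0 u0); lra.
Qed.

Lemma separated_disjoint (A B : set point) :
  separated A B -> interior A `&` interior B = set0.
Proof.
move=> [u [b [u0 Au Bu]]]; apply/seteqP; split => // z [Az Bz].
apply: halfspace_not_interior u0 Au _ Az.
exact: Bu _ (interior_subset Bz).
Qed.

Lemma separated_sub (A B A' B' : set point) :
  A' `<=` A -> B' `<=` B -> separated A B -> separated A' B'.
Proof.
by move=> AA' BB' [u [b [u0 Au Bu]]]; exists u, b; split => // x; [move/AA'/Au | move/BB'/Bu].
Qed.

Lemma boundary_setU_sub (X Y : set point) :
  boundary (X `|` Y) `<=` boundary X `|` boundary Y.
Proof.
move=> x [/closureU XYx XYi].
have nX : ~ interior X x by apply: contra_not XYi; apply: interior_mono => y; left.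
have nY : ~ interior Y x by apply: contra_not XYi; apply: interior_mono => y; right.
by case: XYx => [Xx|Yx]; [left | right].
Qed.

End Space.

Section Motions.
Variable R : realType.
Notation point := (pt R).

Lemma motion_sum n (Q : 'M[R]_3) (t : point) (w : 'I_n -> R) (p : 'I_n -> point) :
  \sum_i w i = 1 -> motion Q t (\sum_i w i *: p i) = \sum_i w i *: motion Q t (p i).
Proof.
move=> w1; rewrite /motion mulmx_suml -[in LHS](scale1r t) -w1 scaler_suml -big_split.
by apply: eq_bigr => i _; rewrite -scalemxAl scalerDr.
Qed.

Lemma image_conv_hull n (Q : 'M[R]_3) (t : point) (p : 'I_n -> point) :
  motion Q t @` conv_hull p = conv_hull (motion Q t \o p).
Proof.
apply/seteqP; split.
- move=> _ [_ [w [w0 [w1 ->]]] <-]; exists w; split => //; split => //.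
  exact: motion_sum.
- move=> _ [w [w0 [w1 ->]]]; exists (\sum_i w i *: p i); first by exists w.
  exact: motion_sum.
Qed.

Section Similarity.
Variables (A : 'M[R]_3) (s : R) (t : point).
Hypotheses (s_gt0 : 0 < s) (AAt : A *m A^T = s%:M).
Local Notation f := (motion A t).

Definition sim_inv (y : point) : point := (y - t) *m (s^-1 *: A^T).

Let s_neq0 : s != 0 := lt0r_neq0 s_gt0.

Lemma mulmx_sim_inv : A *m (s^-1 *: A^T) = 1%:M.
Proof. by rewrite -scalemxAr AAt scale_scalar_mx mulVf ?s_neq0. Qed.

Lemma trmx_mul_sim : A^T *m A = s%:M.
Proof.
have := mulmx1C mulmx_sim_inv; rewrite -scalemxAl => /(congr1 ( *:%R s)).
by rewrite scalerA mulfV ?s_neq0 // scale1r => ->; rewrite scale_scalar_mx mulr1.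
Qed.

Lemma simK : cancel f sim_inv.
Proof. by move=> x; rewrite /sim_inv /motion addrK -mulmxA mulmx_sim_inv mulmx1. Qed.

Lemma sim_invK : cancel sim_inv f.
Proof.
move=> y; rewrite /sim_inv /motion -mulmxA -scalemxAl trmx_mul_sim.
by rewrite scale_scalar_mx mulVf ?s_neq0 // mulmx1 subrK.
Qed.

Lemma sqnorm_sim x y : sqnorm (f x - f y) = s * sqnorm (x - y).
Proof.
rewrite /motion opprD addrACA subrr addr0 -mulmxBl !sqnorm_mx trmx_mul mulmxA.
by rewrite -(mulmxA (x - y)) AAt mul_mx_scalar -scalemxAl mxE.
Qed.

Lemma sqnorm_sim_inv x y : sqnorm (sim_inv x - sim_inv y) = s^-1 * sqnorm (x - y).
Proof. by rewrite -{2}(sim_invK x) -{2}(sim_invK y) sqnorm_sim mulKf ?s_neq0. Qed.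

Lemma image_sim (X : set point) : f @` X = sim_inv @^-1` X.
Proof.
apply/seteqP; split => [_ [x Xx <-]|y Xy]; first by rewrite /preimage /= simK.
by exists (sim_inv y); rewrite ?sim_invK.
Qed.

Lemma interior_sim (X : set point) : interior (f @` X) = f @` interior X.
Proof.
rewrite !image_sim; apply/seteqP; split => y [e [e0 Xe]].
- exists (e / s); split; first exact: divr_gt0.
  move=> x xy; rewrite -(simK x); apply: Xe.
  by rewrite -(sim_invK y) sqnorm_sim mulrC -ltr_pdivlMr.
- exists (e * s); split; first exact: mulr_gt0.
  by move=> x xy; apply: Xe; rewrite sqnorm_sim_inv mulrC ltr_pdivrMr.
Qed.

Lemma closure_sim (X : set point) : closure (f @` X) = f @` closure X.
Proof.
rewrite !image_sim; apply/seteqP; split => y Xy e e0.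
- have [x [Xx xy]] := Xy (e * s) (mulr_gt0 e0 s_gt0).
  by exists (sim_inv x); split; rewrite // sqnorm_sim_inv mulrC ltr_pdivrMr.
- have [x [Xx xy]] := Xy (e / s) (divr_gt0 e0 s_gt0).
  exists (f x); split; first by rewrite /preimage /= simK.
  by rewrite -(sim_invK y) sqnorm_sim mulrC -ltr_pdivlMr.
Qed.

Lemma boundary_sim (X : set point) : boundary (f @` X) = f @` boundary X.
Proof. by rewrite /boundary closure_sim interior_sim !image_sim. Qed.

Lemma image_simI (X Y : set point) : f @` (X `&` Y) = f @` X `&` f @` Y.
Proof. by rewrite !image_sim preimage_setI. Qed.

Lemma interior_disjoint_sim (X Y : set point) : interior X `&` interior Y = set0 ->
  interior (f @` X) `&` interior (f @` Y) = set0.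
Proof. by move=> XY; rewrite !interior_sim -image_simI XY image_set0. Qed.

Lemma det_sim_sqr : \det A ^+ 2 = s ^+ 3.
Proof. by rewrite expr2 -{2}det_tr -det_mulmx AAt det_scalar. Qed.

Lemma nondeg_tetra_sim (p : 'I_4 -> point) : nondeg_tetra p -> nondeg_tetra (f \o p).
Proof.
rewrite /nondeg_tetra => p_nd.
have -> : \matrix_(i < 3) ((f \o p) (lift ord0 i) - (f \o p) ord0)
        = (\matrix_(i < 3) (p (lift ord0 i) - p ord0)) *m A.
  apply/row_matrixP => i; rewrite row_mul !rowK /= /motion.
  by rewrite opprD addrACA subrr addr0 -mulmxBl.
rewrite det_mulmx mulf_neq0 //.
have : s ^+ 3 != 0 by rewrite expf_neq0 ?s_neq0.
by rewrite -det_sim_sqr expf_eq0.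
Qed.

Definition conj_rot (Q : 'M[R]_3) : 'M[R]_3 := s^-1 *: (A^T *m Q *m A).
Definition conj_shift (Q : 'M[R]_3) (u : point) : point := u *m A + t - t *m conj_rot Q.

Lemma mulmx_conj_rot Q : A *m conj_rot Q = Q *m A.
Proof.
rewrite /conj_rot -scalemxAr !mulmxA AAt mul_scalar_mx -!scalemxAl scalerA.
by rewrite mulVf ?s_neq0 // scale1r.
Qed.

Lemma image_conj_motion Q u (X : set point) :
  f @` (motion Q u @` X) = motion (conj_rot Q) (conj_shift Q u) @` (f @` X).
Proof.
rewrite !image_comp; apply: eq_imagel => x _ /=.
rewrite /conj_shift /motion !mulmxDl -!mulmxA mulmx_conj_rot.
by rewrite -!addrA; congr (_ + _); rewrite addrCA (addrCA (t *m _)) subrr addr0.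
Qed.

Lemma rotation_conj Q : rotation_mx Q -> rotation_mx (conj_rot Q).
Proof.
move=> [QQt detQ]; split.
  rewrite /orthogonal_mx /conj_rot linearZ /= !trmx_mul trmxK -scalemxAl -scalemxAr.
  rewrite !mulmxA -(mulmxA _ A) AAt mul_mx_scalar -!scalemxAl -(mulmxA _ Q) QQt mulmx1.
  rewrite trmx_mul_sim !scale_scalar_mx; congr (_%:M).
  by field; rewrite s_neq0.
rewrite /conj_rot detZ !det_mulmx det_tr detQ mulr1 -expr2 det_sim_sqr exprVn.
by rewrite mulVf // expf_neq0 ?s_neq0.
Qed.

End Similarity.

Lemma image_orthogonal (M : 'M[R]_3) (X : set point) :
  M *m M^T = 1%:M -> motion M 0 @` X = [set y | X (y *m M^T)].
Proof.
move=> MMt; rewrite (image_sim 0 ltr01 MMt); apply/funext => y.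
by rewrite /preimage /sim_inv /= subr0 invr1 scale1r.
Qed.

End Motions.

Section Tetrahedra.
Variable R : realType.
Notation point := (pt R).

Lemma conv_hull_reindex n (p : 'I_n -> point) (h : 'I_n -> 'I_n) :
  bijective h -> conv_hull (p \o h) = conv_hull p.
Proof.
have conv_sub (g : 'I_n -> 'I_n) q : injective g -> conv_hull (q \o g) `<=` conv_hull q.
  move=> g_inj _ [w [w0 [w1 ->]]]; have [g' gK g'K] := injF_bij g_inj.
  exists (w \o g'); split=> [i|]; first exact: w0.
  split; first by rewrite (reindex_inj g_inj) -w1; apply: eq_bigr => i _ /=; rewrite gK.
  by rewrite [RHS](reindex_inj g_inj); apply: eq_bigr => i _ /=; rewrite gK.
move=> [h' hK h'K]; apply/seteqP; split; first exact/conv_sub/(can_inj hK).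
rewrite -[X in conv_hull X `<=` _](_ : (p \o h) \o h' = p); last first.
  by apply: funext => i /=; rewrite h'K.
exact/conv_sub/(can_inj h'K).
Qed.

Lemma conv_tetP (A B C D x : point) :
  conv_hull (tet A B C D) x <->
  exists a b c d, [/\ 0 <= a, 0 <= b, 0 <= c, 0 <= d &
    a + b + c + d = 1 /\ x = a *: A + b *: B + c *: C + d *: D].
Proof.
split.
- move=> [w [w0 [w1 ->]]]; exists (w 0), (w 1), (w 2), (w 3).
  by split => //; split; rewrite -?w1 big_ord4.
- move=> [a [b [c [d [a0 b0 c0 d0 [abcd ->]]]]]]; exists (tet a b c d).
  by split; [elim/ord4P | rewrite !big_ord4].
Qed.

Lemma conv_tet_comb (A B C D : point) a b c d :
  0 <= a -> 0 <= b -> 0 <= c -> 0 <= d -> a + b + c + d = 1 ->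
  conv_hull (tet A B C D) (a *: A + b *: B + c *: C + d *: D).
Proof. by move=> *; apply/conv_tetP; exists a, b, c, d. Qed.

Lemma dot_tet (u : point) k a b c d (A B C D : point) : a + b + c + d = 1 ->
  dot u (a *: A + b *: B + c *: C + d *: D) + k =
  a * (dot u A + k) + b * (dot u B + k) + c * (dot u C + k) + d * (dot u D + k).
Proof. by move=> abcd; rewrite !dotE !mxE -[k in LHS]mul1r -abcd; ring. Qed.

Lemma motion_tet Q (t : point) a b c d (A B C D : point) : a + b + c + d = 1 ->
  motion Q t (a *: A + b *: B + c *: C + d *: D) =
  a *: motion Q t A + b *: motion Q t B + c *: motion Q t C + d *: motion Q t D.
Proof.
move=> abcd; have := @motion_sum _ _ Q t (tet a b c d) (tet A B C D).
by rewrite !big_ord4; apply.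
Qed.

Lemma tet_halfspace (u : point) k (A B C D : point) :
  0 <= dot u A + k -> 0 <= dot u B + k -> 0 <= dot u C + k -> 0 <= dot u D + k ->
  forall x, conv_hull (tet A B C D) x -> 0 <= dot u x + k.
Proof.
move=> uA uB uC uD x /conv_tetP [a [b [c [d [a0 b0 c0 d0 [abcd ->]]]]]].
by rewrite dot_tet // !addr_ge0 // mulr_ge0.
Qed.

Lemma tet_halfspaceN (u : point) k (A B C D : point) :
  dot u A + k <= 0 -> dot u B + k <= 0 -> dot u C + k <= 0 -> dot u D + k <= 0 ->
  forall x, conv_hull (tet A B C D) x -> dot u x + k <= 0.
Proof.
have dotN y : dot (- u) y + - k = - (dot u y + k) by rewrite !dotE !mxE; ring.
move=> uA uB uC uD x /(tet_halfspace (u := - u) (k := - k)).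
by rewrite !dotN !oppr_ge0 => /(_ uA uB uC uD).
Qed.

Definition triple_prod (a b c : point) : R :=
  a 0 0 * (b 0 1 * c 0 2 - b 0 2 * c 0 1) - a 0 1 * (b 0 0 * c 0 2 - b 0 2 * c 0 0)
  + a 0 2 * (b 0 0 * c 0 1 - b 0 1 * c 0 0).

Lemma nondeg_tet (A B C D : point) :
  nondeg_tetra (tet A B C D) <-> triple_prod (B - A) (C - A) (D - A) != 0.
Proof. by rewrite /nondeg_tetra det_mx33 /triple_prod !mxE. Qed.

Lemma affine_interpolation (p : 'I_4 -> point) (v : 'I_4 -> R) : nondeg_tetra p ->
  exists u b, forall i, dot u (p i) + b = v i.
Proof.
rewrite /nondeg_tetra; set N := \matrix_(i < 3) _ => N_nd.
have N_unit : N \in unitmx by rewrite unitmxE unitfE.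
pose u : point := (invmx N *m \col_(i < 3) (v (lift ord0 i) - v ord0))^T.
exists u, (v ord0 - dot u (p ord0)) => i.
case: (unliftP ord0 i) => [j ->|->]; last by rewrite addrC subrK.
have : dot u (p (lift ord0 j) - p ord0) = v (lift ord0 j) - v ord0.
  have -> : p (lift ord0 j) - p ord0 = row j N by rewrite rowK.
  by rewrite dot_mx trmxK -row_mul mulKVmx // !mxE.
by rewrite !dotE !mxE; lra.
Qed.

Lemma affine_neq0 (u : point) k x y : dot u x + k != dot u y + k -> u != 0.
Proof. by apply: contraNneq => ->; rewrite !dotE !mxE !mul0r. Qed.

Lemma tetra_bisect (p : 'I_4 -> point) : nondeg_tetra p ->
  exists p1 p2, [/\ nondeg_tetra p1, nondeg_tetra p2,
    conv_hull p = conv_hull p1 `|` conv_hull p2 & separated (conv_hull p1) (conv_hull p2)].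
Proof.
rewrite [p]tet_eta; set A := p 0; set B := p 1; set C := p 2; set D := p 3 => p_nd.
pose X := 2^-1 *: (A + B).
exists (tet A X C D), (tet X B C D); split.
- move: p_nd; rewrite !nondeg_tet.
  have -> : triple_prod (X - A) (C - A) (D - A) = 2^-1 * triple_prod (B - A) (C - A) (D - A).
    by rewrite /triple_prod /X !mxE; field.
  by rewrite mulf_eq0 invr_eq0 pnatr_eq0.
- move: p_nd; rewrite !nondeg_tet.
  have -> : triple_prod (B - X) (C - X) (D - X) = 2^-1 * triple_prod (B - A) (C - A) (D - A).
    by rewrite /triple_prod /X !mxE; field.
  by rewrite mulf_eq0 invr_eq0 pnatr_eq0.
- apply/seteqP; split => x.
  + move/conv_tetP => [a [b [c [d [a0 b0 c0 d0 [abcd ->]]]]]].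
    have [ba|ab] := lerP b a; [left | right].
    * have -> : a *: A + b *: B + c *: C + d *: D = (a - b) *: A + (2 * b) *: X + c *: C + d *: D.
        by apply: pt_eq; rewrite /X !mxE; field.
      by apply: conv_tet_comb; lra.
    * have -> : a *: A + b *: B + c *: C + d *: D = (2 * a) *: X + (b - a) *: B + c *: C + d *: D.
        by apply: pt_eq; rewrite /X !mxE; field.
      by apply: conv_tet_comb; lra.
  + case=> /conv_tetP [a [b [c [d [a0 b0 c0 d0 [abcd ->]]]]]].
    * have -> : a *: A + b *: X + c *: C + d *: D
          = (a + b / 2) *: A + (b / 2) *: B + c *: C + d *: D.
        by apply: pt_eq; rewrite /X !mxE; field.
      by apply: conv_tet_comb; lra.
    * have -> : a *: X + b *: B + c *: C + d *: D
          = (a / 2) *: A + (a / 2 + b) *: B + c *: C + d *: D.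
        by apply: pt_eq; rewrite /X !mxE; field.
      by apply: conv_tet_comb; lra.
- have [u [k uk]] := affine_interpolation (tet 1 (-1) 0 0) p_nd.
  have uA : dot u A + k = 1 := uk 0.
  have uB : dot u B + k = -1 := uk 1.
  have uC : dot u C + k = 0 := uk 2.
  have uD : dot u D + k = 0 := uk 3.
  have uX : dot u X + k = 0.
    by move: uA uB; rewrite /X !dotE !mxE; lra.
  exists u, k; split.
  + by apply: (affine_neq0 (k := k) (x := A) (y := B)); rewrite uA uB; apply/eqP; lra.
  + by apply: tet_halfspace; rewrite ?uA ?uX ?uC ?uD ?ler01.
  + by apply: tet_halfspaceN; rewrite ?uB ?uX ?uC ?uD ?lerN10.
Qed.

Lemma tet_face_boundary (A B C D : point) b c d :
  nondeg_tetra (tet A B C D) -> 0 <= b -> 0 <= c -> 0 <= d -> b + c + d = 1 ->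
  boundary (conv_hull (tet A B C D)) (0 *: A + b *: B + c *: C + d *: D).
Proof.
move=> ABCD_nd b0 c0 d0 bcd; split; first by apply/subset_closure/conv_tet_comb; rewrite ?add0r.
have [u [k uk]] := affine_interpolation (tet 1 0 0 0) ABCD_nd.
have uA : dot u A + k = 1 := uk 0.
have uB : dot u B + k = 0 := uk 1.
have uC : dot u C + k = 0 := uk 2.
have uD : dot u D + k = 0 := uk 3.
apply: (halfspace_not_interior (u := u) (b := k)).
- by apply: (affine_neq0 (k := k) (x := A) (y := B)); rewrite uA uB oner_neq0.
- by apply: tet_halfspace; rewrite ?uA ?uB ?uC ?uD.
- by rewrite dot_tet ?add0r // uA uB uC uD; lra.
Qed.

End Tetrahedra.

Section InsideOut.
Variable R : realType.
Notation point := (pt R).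

Record turns_inside_out (I : finType) (S P : set point) (T : I -> 'I_4 -> point)
    (Q : I -> 'M[R]_3) (t : I -> point) : Prop := TurnsInsideOut {
  tio_nondeg : forall i, nondeg_tetra (T i);
  tio_disjoint : forall i j, i != j ->
    interior (conv_hull (T i)) `&` interior (conv_hull (T j)) = set0;
  tio_cover : P = \bigcup_i conv_hull (T i);
  tio_rotation : forall i, rotation_mx (Q i);
  tio_disjoint_moved : forall i j, i != j ->
    interior (motion (Q i) (t i) @` conv_hull (T i)) `&`
    interior (motion (Q j) (t j) @` conv_hull (T j)) = set0;
  tio_cover_moved : P = \bigcup_i motion (Q i) (t i) @` conv_hull (T i);
  tio_cuts : P `&` boundary S `<=`
    closure (\bigcup_i motion (Q i) (t i) @` (boundary (conv_hull (T i)) `&` interior S)) }.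

(* Relative form of [inside_out_dissectable]: the moved pieces reassemble onto [P] itself
   and only the boundary of the ambient [S] has to be covered by moved cuts.  This makes
   it stable under unions of separated parts and under bisection of pieces. *)
Definition inside_out_within (S P : set point) (k : nat) : Prop :=
  exists (I : finType) (T : I -> 'I_4 -> point) (Q : I -> 'M[R]_3) (t : I -> point),
    #|I| = k /\ turns_inside_out S P T Q t.

Lemma inside_out_within_sim (A : 'M[R]_3) (s : R) (t0 : point) S P k :
  0 < s -> A *m A^T = s%:M -> inside_out_within S P k ->
  inside_out_within (motion A t0 @` S) (motion A t0 @` P) k.
Proof.
move=> s_gt0 AAt [I [T [Q [t [<- [Tnd Tdis Tcov Qrot Mdis Mcov cuts]]]]]].
have conjE := image_conj_motion t0 s_gt0 AAt.
have disjE := interior_disjoint_sim t0 s_gt0 AAt.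
have simI := image_simI t0 s_gt0 AAt.
exists I, (fun i => motion A t0 \o T i), (fun i => conj_rot A s (Q i)),
  (fun i => conj_shift A s t0 (Q i) (t i)).
split => //; split.
- by move=> i; apply: nondeg_tetra_sim t0 s_gt0 AAt _ (Tnd i).
- by move=> i j /Tdis; rewrite -!image_conv_hull; apply: disjE.
- by rewrite Tcov image_bigcup; apply: eq_bigcupr => i _; rewrite image_conv_hull.
- by move=> i; apply: rotation_conj s_gt0 AAt _ (Qrot i).
- by move=> i j /Mdis /disjE; rewrite -!image_conv_hull -!conjE.
- rewrite Mcov image_bigcup; apply: eq_bigcupr => i _.
  by rewrite -image_conv_hull conjE.
- rewrite (boundary_sim _ s_gt0 AAt) -simI; apply: subset_trans (image_subset cuts) _.
  rewrite -(closure_sim _ s_gt0 AAt) image_bigcup; apply: closure_mono.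
  apply: subset_bigcup => i _; rewrite -image_conv_hull conjE.
  by rewrite (boundary_sim _ s_gt0 AAt) (interior_sim _ s_gt0 AAt) simI.
Qed.

Lemma inside_out_within_union S P1 P2 k1 k2 : separated P1 P2 ->
  inside_out_within S P1 k1 -> inside_out_within S P2 k2 ->
  inside_out_within S (P1 `|` P2) (k1 + k2).
Proof.
move=> P12 [I1 [T1 [Q1 [t1 [<- tio1]]]]] [I2 [T2 [Q2 [t2 [<- tio2]]]]].
have [T1nd T1dis T1cov Q1rot M1dis M1cov cuts1] := tio1.
have [T2nd T2dis T2cov Q2rot M2dis M2cov cuts2] := tio2.
pose sel (X : Type) (x1 : I1 -> X) (x2 : I2 -> X) (o : I1 + I2) :=
  match o with inl i => x1 i | inr j => x2 j end.
have sub1 i : conv_hull (T1 i) `<=` P1 by rewrite T1cov => x Tx; exists i.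
have sub2 j : conv_hull (T2 j) `<=` P2 by rewrite T2cov => x Tx; exists j.
have msub1 i : motion (Q1 i) (t1 i) @` conv_hull (T1 i) `<=` P1.
  by rewrite [X in _ `<=` X]M1cov => x Mx; exists i.
have msub2 j : motion (Q2 j) (t2 j) @` conv_hull (T2 j) `<=` P2.
  by rewrite [X in _ `<=` X]M2cov => x Mx; exists j.
have sepD (X1 X2 : set point) : X1 `<=` P1 -> X2 `<=` P2 ->
    interior X1 `&` interior X2 = set0 /\ interior X2 `&` interior X1 = set0.
  move=> X1P X2P; rewrite [in X in _ /\ X]setIC.
  by have -> := separated_disjoint (separated_sub X1P X2P P12).
have bigcupU (F : I1 + I2 -> set point) :
    \bigcup_o F o = \bigcup_i F (inl i) `|` \bigcup_j F (inr j).
  apply/seteqP; split=> x.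
    by case=> [[i|j] _ Fx]; [left; exists i | right; exists j].
  by case=> [[i _ Fx] | [j _ Fx]]; [exists (inl i) | exists (inr j)].
exists (I1 + I2)%type, (sel _ T1 T2), (sel _ Q1 Q2), (sel _ t1 t2).
split; first exact: card_sum.
split.
- by case=> i; [apply: T1nd | apply: T2nd].
- case=> i [] j //= ij; [exact: T1dis | exact: (sepD _ _ (sub1 i) (sub2 j)).1
    | exact: (sepD _ _ (sub1 j) (sub2 i)).2 | exact: T2dis].
- by rewrite bigcupU T1cov T2cov.
- by case=> i; [apply: Q1rot | apply: Q2rot].
- case=> i [] j //= ij; [exact: M1dis | exact: (sepD _ _ (msub1 i) (msub2 j)).1
    | exact: (sepD _ _ (msub1 j) (msub2 i)).2 | exact: M2dis].
- by rewrite bigcupU -M1cov -M2cov.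
- rewrite bigcupU setIUl => y [/cuts1 | /cuts2]; apply: closure_mono; rewrite /=.
  + by move=> z Fz; left.
  + by move=> z Fz; right.
Qed.

Section Refinement.
Variables (I : finType) (T : I -> 'I_4 -> point) (i0 : I) (p1 p2 : 'I_4 -> point).
Hypothesis Ti0 : conv_hull (T i0) = conv_hull p1 `|` conv_hull p2.

Definition refined (o : option I) : 'I_4 -> point :=
  if o is Some i then (if i == i0 then p1 else T i) else p2.

Definition refined_parent (o : option I) : I := odflt i0 o.

Lemma refined_sub o : conv_hull (refined o) `<=` conv_hull (T (refined_parent o)).
Proof.
case: o => [i|] /=; last by rewrite Ti0 => x; right.
by case: eqP => [-> | _ x //]; rewrite Ti0 => x; left.
Qed.

Lemma refined_parentP (G : set point -> set point) :
  (forall A B, G (A `|` B) `<=` G A `|` G B) -> forall i x, G (conv_hull (T i)) x ->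
  exists2 o, refined_parent o = i & G (conv_hull (refined o)) x.
Proof.
move=> GU i x; have [-> | ni] := eqVneq i i0; last by exists (Some i); rewrite //= (negbTE ni).
by rewrite Ti0 => /GU [Gx | Gx]; [exists (Some i0) | exists None]; rewrite //= eqxx.
Qed.

Lemma refined_siblings o1 o2 : o1 != o2 -> refined_parent o1 = refined_parent o2 ->
  (refined o1 = p1 /\ refined o2 = p2) \/ (refined o1 = p2 /\ refined o2 = p1).
Proof.
case: o1 o2 => [i|] [j|] //= ij; last by move=> ->; rewrite eqxx; right.
  by move=> /eqP; rewrite -(inj_eq Some_inj) (negbTE ij).
by move=> <-; rewrite eqxx; left.
Qed.

Lemma interior_disjoint_refined (F : I -> set point -> set point) :
  (forall i, {homo F i : A B / A `<=` B}) ->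
  (forall i, interior (F i (conv_hull p1)) `&` interior (F i (conv_hull p2)) = set0) ->
  (forall i j, i != j ->
    interior (F i (conv_hull (T i))) `&` interior (F j (conv_hull (T j))) = set0) ->
  forall o1 o2, o1 != o2 ->
    interior (F (refined_parent o1) (conv_hull (refined o1))) `&`
    interior (F (refined_parent o2) (conv_hull (refined o2))) = set0.
Proof.
move=> Fmono F12 Fdis o1 o2 o12.
have [p12|p12] := eqVneq (refined_parent o1) (refined_parent o2).
  by rewrite -p12; case: (refined_siblings o12 p12) => -[-> ->]; rewrite // setIC.
by apply: interior_disjoint_sub (Fdis _ _ p12); apply/Fmono/refined_sub.
Qed.

End Refinement.

Lemma inside_out_within_bisect (S P : set point) k :
  inside_out_within S P k.+1 -> inside_out_within S P k.+2.
Proof.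
move=> [I [T [Q [t [cardI [Tnd Tdis Tcov Qrot Mdis Mcov cuts]]]]]].
have [i0 _] : exists i0 : I, i0 \in I by apply/card_gt0P; rewrite cardI.
have [p1 [p2 [p1_nd p2_nd Ti0 p12]]] := tetra_bisect (Tnd i0).
pose g := refined_parent i0.
exists (option I), (refined T i0 p1 p2), (fun o => Q (g o)), (fun o => t (g o)).
split; first by rewrite card_option cardI.
have idU (A B : set point) : A `|` B `<=` A `|` B by [].
split.
- by case=> [i|] //=; case: ifP => _ //; apply: Tnd.
- apply: (interior_disjoint_refined Ti0 (F := fun _ X => X)) => [_ A B //| _ |].
    exact: separated_disjoint p12.
  exact: Tdis.
- rewrite Tcov; apply/seteqP; split=> [x [i _ /(refined_parentP Ti0 idU) [o _ Tx]] | x [o _ Tx]].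
    by exists o.
  by exists (g o) => //; apply: refined_sub Tx.
- by move=> o; apply: Qrot.
- apply: (interior_disjoint_refined Ti0 (F := fun i X => motion (Q i) (t i) @` X)) => // i.
    exact: image_subset.
  have [QQt _] := Qrot i.
  exact: interior_disjoint_sim (t i) ltr01 QQt _ _ (separated_disjoint p12).
- rewrite Mcov; apply/seteqP.
  split=> [_ [i _ [x /(refined_parentP Ti0 idU) [o <- Tx] <-]] | _ [o _ [x Tx <-]]].
    by exists o => //; exists x.
  by exists (g o) => //; exists x => //; apply: refined_sub Tx.
- apply: subset_trans cuts _; apply: closure_mono => _ [i _ [x [Tx Sx] <-]].
  have [o <- Tx'] := refined_parentP Ti0 (@boundary_setU_sub _) Tx.
  by exists o => //; exists x.
Qed.

Lemma inside_out_within_le (S P : set point) k m : (0 < k)%N -> (k <= m)%N ->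
  inside_out_within S P k -> inside_out_within S P m.
Proof.
case: k => // k _ /subnKC <- kP; elim: (m - k.+1)%N => [|n IH]; first by rewrite addn0.
by rewrite addnS addSn; apply: inside_out_within_bisect; rewrite -addSn.
Qed.

(* The motion carries the face [BCD], which is interior to [S] off the edge [CD], onto
   the face [ACD], the only part of the tetrahedron that may meet the boundary of [S]. *)
Lemma inside_out_within_tetra (S : set point) (A B C D : point) Q t0 :
  nondeg_tetra (tet A B C D) -> rotation_mx Q ->
  motion Q t0 A = B -> motion Q t0 B = A -> motion Q t0 C = D -> motion Q t0 D = C ->
  (forall a b c d, 0 <= a -> 0 < b -> 0 <= c -> 0 <= d -> a + b + c + d = 1 ->
     interior S (a *: A + b *: B + c *: C + d *: D)) ->
  inside_out_within S (conv_hull (tet A B C D)) 1.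
Proof.
move=> ABCD_nd Qrot MA MB MC MD Sint; set T := conv_hull _; set M := motion Q t0.
have MT : M @` T = T.
  have swapK : cancel (tet 1 0 3 2 : 'I_4 -> 'I_4) (tet 1 0 3 2) by elim/ord4P.
  rewrite image_conv_hull -(conv_hull_reindex _ (Bijective swapK swapK)).
  by congr conv_hull; apply: funext; elim/ord4P.
exists unit, (fun _ => tet A B C D), (fun _ => Q), (fun _ => t0); split; first exact: card_unit.
have unitE (X : set point) : \bigcup_(_ : unit) X = X.
  by apply/seteqP; split=> [x [] | x Xx] //; exists tt.
split => //; rewrite ?unitE //.
move=> x [/[dup] Tx /conv_tetP [a [b [c [d [a0 b0 c0 d0 [abcd xE]]]]]] [_ notSx]] e e_gt0.
have {b0}b0 : b = 0.
  apply/eqP; rewrite eq_le b0 andbT leNgt; apply/negP => b_gt0.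
  by apply: notSx; rewrite xE; apply: Sint.
have [tau [tau0 tau1 small]] := small_scaling (sqnorm_ge0 (A - x)) e_gt0.
pose z := 0 *: A + ((1 - tau) * a + tau) *: B + ((1 - tau) * d) *: C + ((1 - tau) * c) *: D.
have zsum : 0 + ((1 - tau) * a + tau) + (1 - tau) * d + (1 - tau) * c = 1.
  by rewrite b0 in abcd; nra.
exists (M z); split.
  exists z => //; split; last by apply: Sint; nra.
  by apply: tet_face_boundary => //; nra.
have -> : M z - x = tau *: (A - x).
  rewrite /M /z motion_tet // MA MB MC MD xE b0.
  by apply: pt_eq; rewrite !mxE; move: abcd; rewrite b0 => abcd; nra.
by rewrite sqnormZ.
Qed.

Lemma inside_out_dissectable_within (P : set point) k :
  closure P `<=` P -> inside_out_within P P k -> inside_out_dissectable P k.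
Proof.
move=> Pcl [I [T [Q [t [<- [Tnd Tdis Tcov Qrot Mdis Mcov cuts]]]]]].
pose e : 'I_#|I| -> I := enum_val.
have reindex (F : I -> set point) : [set y | exists i, F (e i) y] = \bigcup_i F i.
  apply/seteqP; split=> [y [i Fy] | y [i _ Fy]]; first by exists (e i).
  by exists (enum_rank i); rewrite /e enum_rankK.
have e_neq i j : i != j -> e i != e j by rewrite (inj_eq enum_val_inj).
exists (fun i => conv_hull (T (e i))), (fun i => Q (e i)), (fun i => t (e i)).
split.
  move=> i; exists 1%N, (fun _ => T (e i)); do 2 split => //.
  by move=> x; split=> [Tx | [_ Tx]] //; exists ord0.
split; first by move=> i j /e_neq /Tdis.
have coverE : [set y | exists i, conv_hull (T (e i)) y] = P.
  by have /= := reindex (fun i => conv_hull (T i)); rewrite -Tcov.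
have cover_movedE :
    [set y | exists i, (motion (Q (e i)) (t (e i)) @` conv_hull (T (e i))) y] = P.
  by have /= := reindex (fun i => motion (Q i) (t i) @` conv_hull (T i)); rewrite -Mcov.
split; first by move=> x; rewrite -[P]coverE.
do 2 split => //; first by move=> i j /e_neq /Mdis.
rewrite /= cover_movedE; split.
  exists 1%:M, 0; split; first by rewrite /orthogonal_mx trmx1 mulmx1.
  apply/seteqP; split=> [x Px | _ [x Px <-]]; last by rewrite /motion mulmx1 addr0.
  by exists x; rewrite // /motion mulmx1 addr0.
move=> x Px; have := cuts x (conj (Pcl _ Px.1) Px).
have /= <- := reindex (fun i => motion (Q i) (t i) @` (boundary (conv_hull (T i)) `&` interior P)).
exact: closure_mono.
Qed.

End InsideOut.

Section UnitOctahedron.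
Variable R : realType.
Notation point := (pt R).

Definition unit_octahedron : set point := regular_octahedron 0 1 1%:M.

Definition norm1 (x : point) : R := \sum_(i < 3) `|x 0 i|.

Lemma norm1E (x : point) : norm1 x = `|x 0 0| + `|x 0 1| + `|x 0 2|.
Proof. exact: big_ord3. Qed.

Lemma unit_oct_vertex_coord (j : 'I_6) (k : 'I_3) :
  oct_vertex 0 1 1%:M j 0 k =
    if (j %% 3 == k)%N then (if (j < 3)%N then 1 else -1 : R) else 0.
Proof.
by rewrite /oct_vertex !mxE add0r mulr_natr mulrb -(inj_eq val_inj) /= inordK ?ltn_pmod.
Qed.

Lemma unit_octahedronP (x : point) : unit_octahedron x <-> norm1 x <= 1.
Proof.
have sumE (w : 'I_6 -> R) :
    \sum_j w j *: oct_vertex 0 1 1%:M j = row3 (w 0 - w 3) (w 1 - w 4) (w 2 - w 5).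
  have wvE j k : (w j *: oct_vertex 0 1 1%:M j) 0 k =
      w j * (if (j %% 3 == k)%N then (if (j < 3)%N then 1 else -1) else 0).
    by rewrite mxE unit_oct_vertex_coord.
  by apply: pt_eq; rewrite !summxE !big_ord6 !wvE !mxE /=; ring.
rewrite norm1E; split.
- move=> [w [w0 [w1 ->]]]; rewrite big_ord6 in w1; rewrite sumE !mxE /=.
  have dist_le (a b : R) : 0 <= a -> 0 <= b -> `|a - b| <= a + b.
    by move=> a0 b0; rewrite ler_norml; apply/andP; split; lra.
  have := dist_le _ _ (w0 0) (w0 3); have := dist_le _ _ (w0 1) (w0 4).
  have := dist_le _ _ (w0 2) (w0 5); lra.
- (* positive and negative parts of the coordinates, plus an even share of the slack *)
  move=> x1; pose sl := (1 - (`|x 0 0| + `|x 0 1| + `|x 0 2|)) / 6.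
  pose w (j : 'I_6) : R := nth 0 [:: (`|x 0 0| + x 0 0) / 2 + sl; (`|x 0 1| + x 0 1) / 2 + sl;
    (`|x 0 2| + x 0 2) / 2 + sl; (`|x 0 0| - x 0 0) / 2 + sl; (`|x 0 1| - x 0 1) / 2 + sl;
    (`|x 0 2| - x 0 2) / 2 + sl] j.
  have abs_ge (y : R) : - `|y| <= y <= `|y| by rewrite -ler_norml.
  have := abs_ge (x 0 0); have := abs_ge (x 0 1); have := abs_ge (x 0 2).
  move=> /andP [? ?] /andP [? ?] /andP [? ?].
  exists w; split; [|split].
  + by case=> [[|[|[|[|[|[|//]]]]]] ?]; rewrite /w /sl /=; lra.
  + by rewrite big_ord6 /w /sl /=; field.
  + by rewrite sumE; apply: pt_eq; rewrite !mxE /w /=; field.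
Qed.

Lemma norm1_near (x y : point) (d : R) :
  0 < d -> sqnorm (y - x) < d ^+ 2 -> norm1 y < norm1 x + 3 * d.
Proof.
move=> d0 yx; rewrite !norm1E.
have near k : `|y 0 k| < `|x 0 k| + d.
  have := coord_lt k d0 yx; rewrite !mxE => yxk.
  have := ler_normD (x 0 k) (y 0 k - x 0 k); rewrite (addrC (x 0 k)) subrK; lra.
by have := near 0; have := near 1; have := near 2; lra.
Qed.

Lemma norm1_lt1_interior (x : point) : norm1 x < 1 -> interior unit_octahedron x.
Proof.
move=> x1; pose d := (1 - norm1 x) / 3; have d0 : 0 < d by rewrite divr_gt0 //; lra.
exists (d ^+ 2); split; first exact: exprn_gt0.
move=> y /(norm1_near d0) yx; apply/unit_octahedronP; rewrite /d in yx; lra.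
Qed.

Lemma unit_octahedron_closed : closure unit_octahedron `<=` unit_octahedron.
Proof.
move=> x xcl; apply/unit_octahedronP; rewrite leNgt; apply/negP => x1.
pose d := (norm1 x - 1) / 3; have d0 : 0 < d by rewrite divr_gt0 //; lra.
have [y [/unit_octahedronP y1 yx]] := xcl _ (exprn_gt0 2 d0).
have : sqnorm (x - y) < d ^+ 2 by rewrite -opprB -scaleN1r sqnormZ sqrrN expr1n mul1r.
by move=> /(norm1_near d0); rewrite /d; lra.
Qed.

Lemma unit_octahedron_invariant (M : 'M[R]_3) : M *m M^T = 1%:M ->
  (forall x, norm1 (x *m M^T) = norm1 x) -> motion M 0 @` unit_octahedron = unit_octahedron.
Proof.
move=> MMt M1; rewrite image_orthogonal //; apply/seteqP; split => x /=;
  by rewrite !unit_octahedronP M1.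
Qed.

Lemma simplex_interior (x : point) : 0 <= x 0 0 -> 0 <= x 0 1 -> 0 <= x 0 2 ->
  x 0 0 + x 0 1 + x 0 2 < 1 -> interior unit_octahedron x.
Proof. by move=> *; apply: norm1_lt1_interior; rewrite norm1E !ger0_norm. Qed.

End UnitOctahedron.

Arguments unit_octahedron {R}.

Section CornerSimplex.
Variable R : realType.
Notation point := (pt R).

Definition mx3 (f : nat -> nat -> R) : 'M[R]_3 := \matrix_(i, j) f i j.

Definition halfturn_011 := mx3 (fun i j => match i, j with
  | 0, 0 => -1 | 1, 2 => 1 | 2, 1 => 1 | _, _ => 0 end).
Definition halfturn_001 := mx3 (fun i j => match i, j with
  | 0, 0 => -1 | 1, 1 => -1 | 2, 2 => 1 | _, _ => 0 end).
Definition cycle_mx := mx3 (fun i j => match i, j with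
  | 0, 1 => 1 | 1, 2 => 1 | 2, 0 => 1 | _, _ => 0 end).

Lemma rotation_halfturns_cycle :
  [/\ rotation_mx halfturn_011, rotation_mx halfturn_001 & rotation_mx cycle_mx].
Proof.
by split; split; rewrite ?det_mx33 ?mxE /=; try ring;
  apply/matrixP => i j; elim/ord3P: i; elim/ord3P: j; rewrite !mxE big_ord3 !mxE /=; ring.
Qed.

Definition e1 : point := row3 1 0 0.
Definition e2 : point := row3 0 1 0.
Definition e3 : point := row3 0 0 1.
Definition m12 : point := row3 2^-1 2^-1 0.
Definition m13 : point := row3 2^-1 0 2^-1.
Definition m23 : point := row3 0 2^-1 2^-1.

Ltac coords :=
  rewrite /e1 /e2 /e3 /m12 /m13 /m23 /motion ?dotE /triple_prod !mxE ?big_ord3 ?mxE /=.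

Lemma inside_out_corner1 :
  inside_out_within unit_octahedron (conv_hull (tet e1 0 m12 m13)) 1.
Proof.
have [Qrot _ _] := rotation_halfturns_cycle.
apply: (inside_out_within_tetra (Q := halfturn_011) (t0 := e1)) => //.
- by rewrite nondeg_tet; coords; apply/eqP; lra.
- by apply: pt_eq; coords; field.
- by apply: pt_eq; coords; field.
- by apply: pt_eq; coords; field.
- by apply: pt_eq; coords; field.
- by move=> a b c d *; apply: simplex_interior; coords; lra.
Qed.

Lemma inside_out_middle :
  inside_out_within unit_octahedron (conv_hull (tet m12 0 m23 m13)) 1.
Proof.
have [_ Qrot _] := rotation_halfturns_cycle.
apply: (inside_out_within_tetra (Q := halfturn_001) (t0 := m12)) => //.
- by rewrite nondeg_tet; coords; apply/eqP; lra.
- by apply: pt_eq; coords; field.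
- by apply: pt_eq; coords; field.
- by apply: pt_eq; coords; field.
- by apply: pt_eq; coords; field.
- by move=> a b c d *; apply: simplex_interior; coords; lra.
Qed.

Lemma inside_out_cycle (A B C D : point) :
  inside_out_within unit_octahedron (conv_hull (tet A B C D)) 1 ->
  inside_out_within unit_octahedron
    (conv_hull (tet (A *m cycle_mx) (B *m cycle_mx) (C *m cycle_mx) (D *m cycle_mx))) 1.
Proof.
have [_ _ [CCt _]] := rotation_halfturns_cycle.
move=> /(inside_out_within_sim 0 ltr01 CCt).
rewrite unit_octahedron_invariant //; last first.
  by move=> x; rewrite !norm1E !mxE !big_ord3 !mxE /= !mulr0 !mulr1 !addr0 !add0r; lra.
rewrite image_conv_hull; congr (inside_out_within _ (conv_hull _) _).
by apply: funext; elim/ord4P; rewrite /= /motion addr0.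
Qed.

Lemma inside_out_corner2 :
  inside_out_within unit_octahedron (conv_hull (tet e2 0 m23 m12)) 1.
Proof.
suff -> : tet e2 0 m23 m12 =
    tet (e1 *m cycle_mx) (0 *m cycle_mx) (m12 *m cycle_mx) (m13 *m cycle_mx).
  exact: inside_out_cycle inside_out_corner1.
by congr tet; apply: pt_eq; coords; ring.
Qed.

Lemma inside_out_corner3 :
  inside_out_within unit_octahedron (conv_hull (tet e3 0 m13 m23)) 1.
Proof.
suff -> : tet e3 0 m13 m23 =
    tet (e2 *m cycle_mx) (0 *m cycle_mx) (m23 *m cycle_mx) (m12 *m cycle_mx).
  exact: inside_out_cycle inside_out_corner2.
by congr tet; apply: pt_eq; coords; ring.
Qed.

Definition corner_simplex : set point :=
  conv_hull (tet e1 0 m12 m13) `|` (conv_hull (tet e2 0 m23 m12) `|`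
  (conv_hull (tet e3 0 m13 m23) `|` conv_hull (tet m12 0 m23 m13))).

Definition std_simplex : set point :=
  [set x | [/\ 0 <= x 0 0, 0 <= x 0 1, 0 <= x 0 2 & x 0 0 + x 0 1 + x 0 2 <= 1]].

Lemma inside_out_corner_simplex : inside_out_within unit_octahedron corner_simplex 4.
Proof.
apply: (inside_out_within_union (k1 := 1) (k2 := 3)); last first.
- apply: (inside_out_within_union (k1 := 1) (k2 := 2)); last first.
  + apply: (inside_out_within_union (k1 := 1) (k2 := 1));
      [|exact: inside_out_corner3 | exact: inside_out_middle].
    exists (row3 (-1) (-1) 1), 0; split; first by rewrite row3_neq0 ?oppr_eq0 ?oner_eq0.
      by apply: tet_halfspace; coords; lra.
    by apply: tet_halfspaceN; coords; lra.
  + exact: inside_out_corner2.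
  + exists (row3 (-1) 1 (-1)), 0; split; first by rewrite row3_neq0 ?oppr_eq0 ?oner_eq0.
      by apply: tet_halfspace; coords; lra.
    by move=> x [] x_in; apply: (tet_halfspaceN _ _ _ _ x_in); coords; lra.
- exact: inside_out_corner1.
- exists (row3 1 (-1) (-1)), 0; split; first by rewrite row3_neq0 ?oner_eq0.
    by apply: tet_halfspace; coords; lra.
  by move=> x [|[]] x_in; apply: (tet_halfspaceN _ _ _ _ x_in); coords; lra.
Qed.

Lemma corner_simplexE : corner_simplex = std_simplex.
Proof.
apply/seteqP; split=> x.
  case=> [|[|[]]] /conv_tetP [a [b [c [d [? ? ? ? [abcd ->]]]]]];
    by rewrite /std_simplex /=; coords; split; lra.
case=> x0 x1 x2 x012.
have [c1|c1] := lerP (x 0 1 + x 0 2) (x 0 0).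
  left; have -> : x = (x 0 0 - x 0 1 - x 0 2) *: e1 + (1 - x 0 0 - x 0 1 - x 0 2) *: 0
      + (2 * x 0 1) *: m12 + (2 * x 0 2) *: m13 by apply: pt_eq; coords; field.
  by apply: conv_tet_comb; lra.
have [c2|c2] := lerP (x 0 0 + x 0 2) (x 0 1).
  right; left; have -> : x = (x 0 1 - x 0 0 - x 0 2) *: e2 + (1 - x 0 0 - x 0 1 - x 0 2) *: 0
      + (2 * x 0 2) *: m23 + (2 * x 0 0) *: m12 by apply: pt_eq; coords; field.
  by apply: conv_tet_comb; lra.
have [c3|c3] := lerP (x 0 0 + x 0 1) (x 0 2).
  right; right; left; have -> : x = (x 0 2 - x 0 0 - x 0 1) *: e3
      + (1 - x 0 0 - x 0 1 - x 0 2) *: 0 + (2 * x 0 0) *: m13 + (2 * x 0 1) *: m23.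
    by apply: pt_eq; coords; field.
  by apply: conv_tet_comb; lra.
right; right; right; have -> : x = (x 0 0 + x 0 1 - x 0 2) *: m12
    + (1 - x 0 0 - x 0 1 - x 0 2) *: 0 + (x 0 1 + x 0 2 - x 0 0) *: m23
    + (x 0 0 + x 0 2 - x 0 1) *: m13 by apply: pt_eq; coords; field.
by apply: conv_tet_comb; lra.
Qed.

End CornerSimplex.

Arguments std_simplex {R}.

Section Orthants.
Variable R : realType.
Notation point := (pt R).

Lemma inside_out_within_coord_union (S : set point) (k : 'I_3) (X : bool -> set point) n :
  (forall x, X true x -> 0 <= x 0 k) -> (forall x, X false x -> x 0 k <= 0) ->
  inside_out_within S (X true) n -> inside_out_within S (X false) n ->
  inside_out_within S (X true `|` X false) (n + n).
Proof.
move=> Xt Xf; apply: inside_out_within_union; exists (delta_mx 0 k), 0.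
have dotE x : dot (delta_mx 0 k) x + 0 = x 0 k.
  rewrite addr0 /dot (bigD1 k) //= big1 => [|i /negbTE ik]; rewrite !mxE ?ik ?eqxx ?mul0r //.
  by rewrite mul1r addr0.
split=> [|x|x]; rewrite ?dotE; [|exact: Xt | exact: Xf].
by apply/eqP => /matrixP /(_ 0 k); rewrite !mxE !eqxx /= => /eqP; rewrite oner_eq0.
Qed.

Definition sign (b : bool) : R := if b then 1 else -1.

Definition sign_mx (a b c : bool) := mx3 (fun i j => match i, j with
  | 0, 0 => sign a | 1, 1 => sign b | 2, 2 => sign c | _, _ => 0 end).

Lemma sign_sqr b : sign b * sign b = 1.
Proof. by case: b; rewrite /sign; ring. Qed.

Lemma sign_mx_orthogonal a b c : sign_mx a b c *m (sign_mx a b c)^T = 1%:M.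
Proof.
apply/matrixP => i j; elim/ord3P: i; elim/ord3P: j;
  by rewrite !mxE big_ord3 !mxE /= ?sign_sqr; ring.
Qed.

Lemma mul_sign_mxT (x : point) a b c :
  x *m (sign_mx a b c)^T = row3 (sign a * x 0 0) (sign b * x 0 1) (sign c * x 0 2).
Proof. by apply: pt_eq; rewrite !mxE big_ord3 !mxE /=; ring. Qed.

Definition orthant (a b c : bool) : set point := motion (sign_mx a b c) 0 @` std_simplex.

Lemma orthantE a b c : orthant a b c =
  [set x : point |
    [/\ 0 <= sign a * x 0 0, 0 <= sign b * x 0 1, 0 <= sign c * x 0 2 & norm1 x <= 1]].
Proof.
have normE s (y : R) : 0 <= sign s * y -> `|y| = sign s * y.
  by case: s; rewrite /sign ?mul1r ?mulN1r => y0; [rewrite ger0_norm | rewrite -normrN ger0_norm].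
rewrite /orthant image_orthogonal ?sign_mx_orthogonal //; apply/seteqP.
split=> x /=; rewrite /std_simplex mul_sign_mxT /= norm1E !mxE /= => -[xa xb xc xs];
  by split => //; rewrite ?(normE a _ xa) ?(normE b _ xb) ?(normE c _ xc) in xs *.
Qed.

Lemma inside_out_orthant a b c : inside_out_within unit_octahedron (orthant a b c) 4.
Proof.
have := inside_out_within_sim 0 ltr01 (sign_mx_orthogonal a b c) (inside_out_corner_simplex R).
rewrite corner_simplexE unit_octahedron_invariant ?sign_mx_orthogonal // => x.
by rewrite mul_sign_mxT !norm1E !mxE /= !normrM; case: a; case: b; case: c;
  rewrite /sign ?normrN normr1 !mul1r.
Qed.

Definition orthants_z a b := orthant a b true `|` orthant a b false.
Definition orthants_yz a := orthants_z a true `|` orthants_z a false.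

Lemma unit_octahedron_orthants :
  unit_octahedron = orthants_yz true `|` orthants_yz false.
Proof.
apply/seteqP; split=> [x /unit_octahedronP x1 | x].
  have sign_ge0 (y : R) : exists s, 0 <= sign s * y.
    by have [y0|y0] := lerP 0 y; [exists true | exists false]; rewrite /sign; lra.
  have [[a xa] [b xb] [c xc]] := And3 (sign_ge0 (x 0 0)) (sign_ge0 (x 0 1)) (sign_ge0 (x 0 2)).
  have : orthant a b c x by rewrite orthantE.
  by case: a {xa}; case: b {xb}; case: c {xc} => ?;
    [left; left; left | left; left; right | left; right; left | left; right; right
    | right; left; left | right; left; right | right; right; left | right; right; right].
by rewrite /orthants_yz /orthants_z !orthantE => -[[[]|[]]|[[]|[]]] [_ _ _ /unit_octahedronP].
Qed.

Lemma inside_out_unit_octahedron : inside_out_within (@unit_octahedron R) unit_octahedron 32.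
Proof.
have orthant_sign a b c x : orthant a b c x ->
    [/\ 0 <= sign a * x 0 0, 0 <= sign b * x 0 1 & 0 <= sign c * x 0 2].
  by rewrite orthantE => -[].
have z_union a b : inside_out_within unit_octahedron (orthants_z a b) 8.
  apply: (inside_out_within_coord_union (k := 2) (X := orthant a b) (n := 4));
    [move=> x | move=> x | exact: inside_out_orthant ..].
    by move=> /orthant_sign [_ _]; rewrite /sign mul1r.
  by move=> /orthant_sign [_ _]; rewrite /sign mulN1r oppr_ge0.
have yz_union a : inside_out_within unit_octahedron (orthants_yz a) 16.
  apply: (inside_out_within_coord_union (k := 1) (X := orthants_z a) (n := 8));
    [move=> x | move=> x | exact: z_union ..].
    by case=> /orthant_sign [_]; rewrite /sign mul1r.
  by case=> /orthant_sign [_]; rewrite /sign mulN1r oppr_ge0.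
rewrite [X in inside_out_within _ X]unit_octahedron_orthants.
apply: (inside_out_within_coord_union (k := 0) (X := orthants_yz) (n := 16));
  [move=> x | move=> x | exact: yz_union ..].
  by case=> -[] /orthant_sign []; rewrite /sign mul1r.
by case=> -[] /orthant_sign []; rewrite /sign mulN1r oppr_ge0.
Qed.

End Orthants.

Theorem lemma4 (R : realType) (c : pt R) (r : R) (U : 'M[R]_3) :
  0 < r -> orthogonal_mx U ->
  inside_out_dissectable (regular_octahedron c r U) 124.
Proof.
move=> r_gt0 U_orth.
have r2_gt0 : 0 < r ^+ 2 by exact: exprn_gt0.
have rU : (r *: U) *m (r *: U)^T = (r ^+ 2)%:M.
  by rewrite linearZ /= -scalemxAl -scalemxAr scalerA U_orth scale_scalar_mx mulr1 expr2.
have octE : motion (r *: U) c @` unit_octahedron = regular_octahedron c r U.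
  rewrite image_conv_hull; congr conv_hull; apply: funext => j.
  rewrite /= /oct_vertex /motion add0r -scalemxAl -scalemxAr -row_mul mul1mx scalerA addrC.
  by case: ifP; rewrite ?mul1r ?mulN1r.
rewrite -octE; apply: inside_out_dissectable_within.
  by rewrite (closure_sim _ r2_gt0 rU); apply/image_subset/unit_octahedron_closed.
apply: (inside_out_within_sim _ r2_gt0 rU).
by apply: (inside_out_within_le _ _ (inside_out_unit_octahedron R)).
Qed.
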